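(* Let $G$ be a graph with $n$ vertices. Then $n-\nabla(G)\le \gamma^{DLD}(G)$.
   Context: All graphs are finite, simple and undirected (not necessarily connected). For $u\in V$, $N(u)$ is the set of neighbours of $u$ and $N[u]=N(u)\cup\{u\}$. A code is a non-empty subset $C\subseteq V$; $I(C;u)=N[u]\cap C$. A code $C$ is solid-locating-dominating if $I(C;u)\ne\emptyset$ for every $u\in V\setminus C$ and $I(C;u)\not\subseteq I(C;v)$ for all distinct $u,v\in V\setminus C$; $\gamma^{DLD}(G)$ is the minimum size of such a code. The vicinal preorder $\lesssim$ on $V(G)$ is defined by $x\lesssim y$ iff $N(x)\subseteq N[y]$. A chain is a set $B\subseteq V(G)$ such that any two elements $x,y\in B$ satisfy $x\lesssim y$ or $y\lesssim x$. The Dilworth number $\nabla(G)$ is the minimum number of chains of the vicinal preorder needed to cover $V(G)$ (equivalently, the maximum size of an antichain, i.e. a set $A$ such that $x,y\in A$ and $x\lesssim y$ imply $x=y$). *)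

From mathcomp Require Import all_boot.
Set Implicit Arguments. Unset Strict Implicit. Unset Printing Implicit Defensive.

Definition simple_graph (T : finType) (e : rel T) : Prop :=
  symmetric e /\ irreflexive e.

Definition nbh (T : finType) (e : rel T) (u : T) : {set T} := [set v | e u v].
Definition cnbh (T : finType) (e : rel T) (u : T) : {set T} := u |: nbh e u.

Definition Icode (T : finType) (e : rel T) (C : {set T}) (u : T) : {set T} :=
  cnbh e u :&: C.

Definition solid_locating_dominating (T : finType) (e : rel T) (C : {set T}) : Prop :=
  C != set0 /\
  (forall u, u \notin C -> Icode e C u != set0) /\
  (forall u v, u \notin C -> v \notin C -> u != v -> ~~ (Icode e C u \subset Icode e C v)).

Definition is_gammaDLD (T : finType) (e : rel T) (k : nat) : Prop :=
  (exists C : {set T}, solid_locating_dominating e C /\ #|C| = k) /\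
  (forall C : {set T}, solid_locating_dominating e C -> k <= #|C|).

Definition vicinal (T : finType) (e : rel T) (x y : T) : bool :=
  nbh e x \subset cnbh e y.

Definition is_chain (T : finType) (e : rel T) (B : {set T}) : bool :=
  [forall x in B, forall y in B, vicinal e x y || vicinal e y x].

Definition chain_cover (T : finType) (e : rel T) (P : {set {set T}}) : bool :=
  [forall B in P, is_chain e B] && (\bigcup_(B in P) B == [set: T]).

Definition is_dilworth (T : finType) (e : rel T) (d : nat) : Prop :=
  (exists P : {set {set T}}, chain_cover e P /\ #|P| = d) /\
  (forall P : {set {set T}}, chain_cover e P -> d <= #|P|).

From mathcomp Require Import all_boot.

(* If [u] lies outside a solid-locating-dominating code [C] and [u ≲ v], then
   [I(C;u) ⊆ I(C;v)], which the code forbids unless [v] is in [C] or [u = v].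
   Hence a chain of the vicinal preorder contains at most one vertex outside
   [C], so a cover by [∇(G)] chains leaves at most [∇(G)] vertices outside [C]. *)

Section SolidLocatingChains.

Variables (T : finType) (e : rel T).

Lemma Icode_subset_vicinal (C : {set T}) (u v : T) :
  u \notin C -> vicinal e u v -> Icode e C u \subset Icode e C v.
Proof.
move=> uNC /subsetP uv; apply/subsetP => x.
rewrite /Icode /cnbh !inE => /andP [/orP [/eqP-> | eux] xC]; first by rewrite xC in uNC.
by have := uv x; rewrite /nbh /cnbh !inE eux xC => /(_ isT) ->.
Qed.

Lemma sld_chain_notin_code_eq (C B : {set T}) (u v : T) :
  solid_locating_dominating e C -> is_chain e B ->
  u \in B -> v \in B -> u \notin C -> v \notin C -> u = v.
Proof.
move=> [_ [_ sepC]] /forallP chainB uB vB uNC vNC.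
apply/eqP; apply: contraT => neq_uv.
have /orP [uv | vu] := implyP (forallP (implyP (chainB u) uB) v) vB.
- by have := sepC u v uNC vNC neq_uv; rewrite Icode_subset_vicinal.
- by have := sepC v u vNC uNC; rewrite eq_sym neq_uv Icode_subset_vicinal // => /(_ isT).
Qed.

Lemma card_sld_compl_le_chain_cover (C : {set T}) (P : {set {set T}}) :
  solid_locating_dominating e C -> chain_cover e P -> #|~: C| <= #|P|.
Proof.
move=> sldC /andP [/forallP chainsP /eqP coverP].
have chain_of (u : T) : exists2 B, B \in P & u \in B.
  have : u \in \bigcup_(B in P) B by rewrite coverP inE.
  by case/bigcupP => B BP uB; exists B.
pose f (u : T) := odflt set0 [pick B in P | u \in B].
have fP (u : T) : f u \in P /\ u \in f u.
  rewrite /f; case: pickP => [B /andP [] // | noB].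
  by have [B BP uB] := chain_of u; have := noB B; rewrite BP uB.
have f_inj : {in ~: C &, injective f}.
  move=> u v; rewrite !inE => uNC vNC fuv.
  have [fuP ufu] := fP u; have [_ vfv] := fP v; rewrite -fuv in vfv.
  exact: sld_chain_notin_code_eq sldC (implyP (chainsP _) fuP) ufu vfv uNC vNC.
rewrite -(card_in_imset f_inj); apply/subset_leq_card/subsetP => _ /imsetP [u _ ->].
by case: (fP u).
Qed.

End SolidLocatingChains.

Theorem mainTheorem6 (T : finType) (e : rel T) (d g : nat) :
  simple_graph e -> is_dilworth e d -> is_gammaDLD e g ->
  #|T| - d <= g.
Proof.
move=> _ [[P [coverP <-]] _] [[C [sldC <-]] _].
rewrite leq_subLR -(cardsC C) addnC leq_add2r.
exact: card_sld_compl_le_chain_cover sldC coverP.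
Qed.
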